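(* Let $(E,B,p,\Gamma)$ be a compact graph bundle, let $F:E\to E$ and $f:B\to B$ be continuous with $p\circ F=f\circ p$, $(B,f)$ minimal, and let $M$ be a minimal set of $F$ with $p(M)=B$. Let $H$ be the homeo-part of $f$, and suppose that $M_z$ is finite for some $z\in H$. Then $N:=\min\{\operatorname{card}M_x: x\in H\}$ is finite and there is a residual set $R\subseteq B$ such that $\operatorname{card}M_b=N$ for every $b\in R$.
   Context: A compact graph bundle $(E,B,p,\Gamma)$: $E,B$ compact metric spaces, $\Gamma$ a graph (nonempty compact metric space that is a union of finitely many arcs pairwise disjoint or meeting only at end-points), $p:E\to B$ a continuous surjection such that each $b\in B$ has an open neighbourhood $U$ and a homeomorphism $h:p^{-1}(U)\to U\times\Gamma$ with $\mathrm{pr}_1\circ h=p$. $M_b=M\cap p^{-1}(b)$. Minimal map: no proper nonempty closed invariant subset; minimal set: nonempty closed invariant set on which the map is minimal. Homeo-part of a continuous selfmap $f$ of a compact metric space $X$: the set $H$ of points $x_0\in X$ whose full orbit $\{x\in X:\exists i,j\ge0,\ f^i(x)=f^j(x_0)\}$ is of the form $\{\dots,x_{-2},x_{-1},x_0,x_1,x_2,\dots\}$ with $f(x_n)=x_{n+1}$ for every integer $n$. Residual: complement of a countable union of nowhere dense sets. *)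

From HB Require Import structures.
From mathcomp Require Import all_boot all_order all_algebra.
From mathcomp Require Import all_classical all_reals all_analysis.
Set Implicit Arguments. Unset Strict Implicit. Unset Printing Implicit Defensive.
Import Order.TTheory GRing.Theory Num.Theory.
Local Open Scope classical_set_scope.
Local Open Scope ring_scope.

(* A compact metric space: a Hausdorff (hence metric) pseudometric space
   whose underlying set is compact. *)
Definition compact_metric (R : realType) (X : pseudoMetricType R) : Prop :=
  hausdorff_space X /\ compact [set: X].

(* An arc in X with parametrisation a : [0,1] -> X (continuous and injective
   on [0,1]; in a Hausdorff space this is an embedding). *)
Definition is_arc (R : realType) (X : topologicalType) (a : R -> X) : Prop :=
  {within `[0%R, 1%R], continuous a} /\ set_inj `[0%R, 1%R] a.

Definition is_graph (R : realType) (G : pseudoMetricType R) : Prop :=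
  compact_metric G /\ [set: G] !=set0 /\
  exists (n : nat) (a : 'I_n -> R -> G),
    (forall i, is_arc (a i)) /\
    \bigcup_(i in [set: 'I_n]) (a i @` `[0%R, 1%R]) = [set: G] /\
    (forall i j, i != j ->
       (a i @` `[0%R, 1%R]) `&` (a j @` `[0%R, 1%R])
         `<=` [set a i 0%R; a i 1%R] `&` [set a j 0%R; a j 1%R]).

Definition graph_bundle (R : realType) (E B G : pseudoMetricType R)
    (p : E -> B) : Prop :=
  compact_metric E /\ compact_metric B /\ is_graph G /\
  continuous p /\ p @` [set: E] = [set: B] /\
  forall b : B, exists U : set B, open U /\ U b /\
    exists (h : E -> B * G) (g : B * G -> E),
      {within p @^-1` U, continuous h} /\
      {within U `*` [set: G], continuous g} /\
      (forall x, (p @^-1` U) x ->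
         (U `*` [set: G]) (h x) /\ g (h x) = x /\ (h x).1 = p x) /\
      (forall y, (U `*` [set: G]) y -> (p @^-1` U) (g y) /\ h (g y) = y).

Definition minimal_map (T : topologicalType) (f : T -> T) : Prop :=
  forall A : set T, A !=set0 -> closed A -> f @` A `<=` A -> A = [set: T].

(* Minimal set: nonempty closed invariant set on which the map is minimal
   (closed subsets of the closed set M are the same in M and in T). *)
Definition minimal_set (T : topologicalType) (f : T -> T) (M : set T) : Prop :=
  M !=set0 /\ closed M /\ f @` M `<=` M /\
  forall A : set T, A `<=` M -> A !=set0 -> closed A -> f @` A `<=` A -> A = M.

Definition fibre (E B : Type) (p : E -> B) (M : set E) (b : B) : set E :=
  M `&` p @^-1` [set b].

Definition full_orbit (T : Type) (f : T -> T) (x0 : T) : set T :=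
  [set x | exists i j : nat, iter i f x = iter j f x0].

Definition homeo_part (T : Type) (f : T -> T) : set T :=
  [set x0 | exists x : int -> T, x 0 = x0 /\ (forall n : int, f (x n) = x (n + 1)) /\
            full_orbit f x0 = range x].

Definition has_card (T : Type) (A : set T) (n : nat) : Prop := (A #= `I_n)%card.

Definition nowhere_dense (T : topologicalType) (A : set T) : Prop :=
  (closure A)° = set0.

Definition residual (T : topologicalType) (S : set T) : Prop :=
  exists A : nat -> set T, (forall k, nowhere_dense (A k)) /\
    S = ~` \bigcup_k A k.

From HB Require Import structures.
From mathcomp Require Import all_boot all_order all_algebra.
From mathcomp Require Import all_classical all_reals all_analysis.
From mathcomp Require Import zify.
Import Order.TTheory GRing.Theory Num.Theory.
Local Open Scope classical_set_scope.
Local Open Scope ring_scope.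
Set Implicit Arguments.
Unset Strict Implicit.
Unset Printing Implicit Defensive.

(* For a minimal map [f] of a compact metric space, the closure of the set of
   points with two [e]-apart preimages is nowhere dense, and so are all its
   iterated images and preimages. A point whose forward orbit avoids all of
   them has exactly one preimage at each point of its full orbit, so the
   homeo-part of [f] contains a residual set.
   If [x] is in the homeo-part and [M_x] has [N] points, the fibre over
   [f^n(x)] is the image of [M_x] under [F^n], hence covered by [N] balls of
   any radius. By upper semicontinuity of [b |-> M_b], the set of [b] whose
   fibre is covered by [N] balls of radius [e] is open, and it contains the
   dense forward orbit of [x]. On the intersection of these residual sets
   every fibre has at most [N] points, and on the homeo-part at least [N] by
   the choice of [N]. *)

Lemma compact_closed_image (T U : topologicalType) (g : T -> U) (A : set T) :
  hausdorff_space U -> compact [set: T] -> continuous g -> closed A ->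
  closed (g @` A).
Proof.
move=> hU cT cg cA; apply: compact_closed => //.
apply: continuous_compact; first exact: continuous_subspaceT.
exact: (subclosed_compact cA cT).
Qed.

Lemma compact_bigcap_nonempty (T : topologicalType) (C : nat -> set T) :
  compact [set: T] -> (forall k, closed (C k)) ->
  (forall m, exists x, forall k, (k < m)%N -> C k x) ->
  \bigcap_k C k !=set0.
Proof.
move=> cT cC finC.
pose K m := [set x | forall k, (k < m)%N -> C k x].
pose F := filter_from [set: nat] K.
have FF : ProperFilter F.
  apply: filter_from_proper => [|m _]; last exact: finC.
  apply: filter_from_filter; first by exists 0%N.
  move=> i j _ _; exists (maxn i j) => // x Kx; split=> k km; apply: Kx.
    exact: leq_trans km (leq_maxl _ _).
  exact: leq_trans km (leq_maxr _ _).
have [x [_ clx]] := cT F FF filterT.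
exists x => k _; apply: cC => V nV.
have FK : F (K k.+1) by exists k.+1.
by have [y [Ky Vy]] := clx _ _ FK nV; exists y; split => //; apply: Ky.
Qed.

Lemma continuous_iter (T : topologicalType) (f : T -> T) n :
  continuous f -> continuous (iter n f).
Proof.
move=> cf; elim: n => [|n IH] x /=; first exact: cvg_id.
exact: continuous_comp (IH x) (cf _).
Qed.

Lemma inj_iter (T : Type) (f : T -> T) n : injective f -> injective (iter n f).
Proof. by move=> finj; elim: n => [|n IH] x y //= /finj /IH. Qed.

Definition closed_nowhere_dense (T : topologicalType) (C : set T) :=
  closed C /\ C° = set0.

Lemma closed_nowhere_denseW (T : topologicalType) (C : set T) :
  closed_nowhere_dense C -> nowhere_dense C.
Proof. by move=> [cC iC]; rewrite /nowhere_dense -(closure_id C).1. Qed.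

Section MinimalMap.
Variables (T : topologicalType) (f : T -> T).
Hypotheses (cT : compact [set: T]) (cf : continuous f) (mf : minimal_map f).

(* The sets [\bigcap_(k < m) f^-k(A)] are nonempty because [f] maps [A] onto
   [T]; their intersection is then a nonempty closed invariant set. *)
Lemma minimal_image_setT (A : set T) :
  closed A -> (forall y, exists2 x, A x & f x = y) -> A = [set: T].
Proof.
move=> cA fA; apply/seteqP; split=> // x0 _.
pose Ainf := \bigcap_k (iter k f @^-1` A).
have backward m y : exists x, (forall k, (k < m)%N -> A (iter k f x)) /\
    iter m f x = y.
  elim: m y => [|m IH] y; first by exists y.
  have [x [Ax <-]] := IH y; have [z Az fz] := fA x.
  exists z; split=> [[|k] //|]; last by rewrite iterSr fz.
  by rewrite ltnS iterSr fz; apply: Ax.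
have closed_pre k : closed (iter k f @^-1` A).
  by apply: preimage_closed => // x _; exact: continuous_iter.
have closed_Ainf : closed Ainf.
  by apply: closed_bigI => k _; exact: closed_pre.
have Ainf0 : Ainf !=set0.
  apply: compact_bigcap_nonempty => // m.
  by have [x [Ax _]] := backward m x0; exists x.
have f_Ainf : f @` Ainf `<=` Ainf.
  by move=> _ [x Ax <-] k _; rewrite /= -iterSr; exact: Ax.
have : Ainf x0 by rewrite (mf Ainf0 closed_Ainf f_Ainf).
by move=> /(_ 0%N I).
Qed.

Hypothesis hT : hausdorff_space T.

Lemma minimal_surjective y : exists x, f x = y.
Proof.
have fT0 : f @` [set: T] !=set0 by exists (f y), y.
have ffT : f @` (f @` [set: T]) `<=` f @` [set: T].
  by move=> _ [_ [x _ <-] <-]; exists (f x).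
have fT := mf fT0 (compact_closed_image hT cT cf closedT) ffT.
have : (f @` [set: T]) y by rewrite fT.
by move=> [x _ <-]; exists x.
Qed.

(* If [U] is the interior of [f(C)], then [C `|` f^-1(~` U)] is closed and maps
   onto [T], so it is [T] and the open set [f^-1(U)] lies in [C]. *)
Lemma closed_nowhere_dense_image (C : set T) :
  closed_nowhere_dense C -> closed_nowhere_dense (f @` C).
Proof.
move=> [cC iC]; split; first exact: compact_closed_image.
apply/seteqP; split=> [y0 fCy0|//].
pose U := (f @` C)°.
have oU : open U by exact: open_interior.
have cfU : closed (C `|` f @^-1` (~` U)).
  apply: closedU => //; apply: preimage_closed; first by move=> x _; exact: cf.
  exact: open_closedC.
have CfU : C `|` f @^-1` (~` U) = [set: T].
  apply: minimal_image_setT => // y; have [Uy|nUy] := pselect (U y).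
    by have [x Cx <-] := interior_subset Uy; exists x => //; left.
  by have [x fx] := minimal_surjective y; exists x => //; right; rewrite /= fx.
have [x0 fx0] := minimal_surjective y0.
suff : C° x0 by rewrite iC.
rewrite /interior nbhsE; exists (f @^-1` U).
  by split; [apply: open_comp => // x _; exact: cf | rewrite /= fx0].
by move=> w Uw; have : [set: T] w by []; rewrite -CfU => -[].
Qed.

(* With [W] the interior of [f^-1(C)], the complement of [f(~` W)] is an open
   subset of [C], hence empty: [~` W] maps onto [T], so [W] is empty. *)
Lemma closed_nowhere_dense_preimage (C : set T) :
  closed_nowhere_dense C -> closed_nowhere_dense (f @^-1` C).
Proof.
move=> [cC iC]; split; first by apply: preimage_closed => // x _; exact: cf.
apply/seteqP; split=> [x0 Wx0|//].
pose W := (f @^-1` C)°.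
have cW : closed (~` W) by apply: open_closedC; exact: open_interior.
have V0 : ~` (f @` ~` W) `<=` set0.
  rewrite -iC -open_subsetE; last exact/closed_openC/compact_closed_image.
  move=> z nz; have [w fw] := minimal_surjective z.
  have [Ww|nWw] := pselect (W w); last by exfalso; apply: nz; exists w.
  by rewrite -fw; exact: interior_subset Ww.
suff /seteqP[_ /(_ x0 I)] : ~` W = [set: T] by [].
apply: minimal_image_setT => // y; apply: contrapT => ny.
by apply: (V0 y) => -[x nWx fx]; apply: ny; exists x.
Qed.

Lemma closed_nowhere_dense_iter_image (C : set T) i :
  closed_nowhere_dense C -> closed_nowhere_dense (iter i f @` C).
Proof.
move=> nC; elim: i => [|i IH]; first by rewrite image_id.
rewrite -[iter i.+1 f]/(f \o iter i f) -image_comp.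
exact: closed_nowhere_dense_image.
Qed.

Lemma closed_nowhere_dense_iter_preimage (C : set T) j :
  closed_nowhere_dense C -> closed_nowhere_dense (iter j f @^-1` C).
Proof.
elim: j C => [//|j IH] C nC.
exact/(IH (f @^-1` C))/closed_nowhere_dense_preimage.
Qed.

Lemma minimal_orbit_meets_open (b : T) (U : set T) :
  open U -> U !=set0 -> exists n, U (iter n f b).
Proof.
move=> oU [u Uu].
pose orbit := range (fun n => iter n f b).
have orbitT : closure orbit = [set: T].
  apply: mf; first by exists b; apply: subset_closure; exists 0%N.
    exact: closed_closure.
  move=> _ [x clx <-] V /cf/clx [_ [[n _ <-] Vn]].
  by exists (iter n.+1 f b); split => //; exists n.+1.
have : closure orbit u by rewrite orbitT.
by move=> /(_ U (open_nbhs_nbhs (conj oU Uu))) [_ [[n _ <-] Un]]; exists n.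
Qed.

Lemma closed_nowhere_dense_setC_orbit (b : T) (U : set T) :
  open U -> (forall n, U (iter n f b)) -> closed_nowhere_dense (~` U).
Proof.
move=> oU Ub; split; first exact: open_closedC.
apply/seteqP; split=> [x ix|//].
have [n /interior_subset] :=
  minimal_orbit_meets_open b (@open_interior _ (~` U)) (ex_intro _ x ix).
by apply; apply: Ub.
Qed.

(* A periodic orbit is closed and invariant, hence all of [T]; then if
   [f a = f b] with [a <> b], the closed set [~` [set a]] still maps onto
   [T]. *)
Lemma periodic_minimal_injective (u : T) (d : nat) :
  (0 < d)%N -> iter d f u = u -> injective f.
Proof.
move=> d0 du.
have fin_closed :=
  (@accessible_finite_set_closed T).1 (hausdorff_accessible hT).
pose orbit := (fun t => iter t f u) @` `I_d.
have fin_orbit : finite_set orbit by exact: finite_image (finite_II d).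
have orbitT : orbit = [set: T].
  apply: mf; [by exists u, 0%N|exact: fin_closed|].
  move=> _ [_ [t td <-] <-].
  have [td1|] := ltnP t.+1 d; first by exists t.+1.
  move=> dt; rewrite -iterS (_ : t.+1 = d) ?du; first by exists 0%N.
  by apply/eqP; rewrite eqn_leq dt td.
have finT : finite_set [set: T] by rewrite -orbitT.
move=> a b fab; apply: contrapT => nab.
have : ~` [set a] = [set: T].
  apply: minimal_image_setT.
    by apply: fin_closed; apply: sub_finite_set finT.
  move=> y; have [->|nya] := pselect (y = f a).
    by exists b => // ba; apply: nab.
  have [x fx] := minimal_surjective y.
  by exists x => // xa; apply: nya; rewrite -fx xa.
by move=> /seteqP[_ /(_ a I)]; apply.
Qed.

(* If a point of the backward orbit of [b] lay in its forward orbit, that orbit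
   would be periodic and [f] injective. *)
Lemma homeo_part_iter_inj (b : T) : homeo_part f b ->
  forall n y, iter n f y = iter n f b -> y = b.
Proof.
move=> [x [x0 [xS orbit_x]]] n y e.
have iter_x k a : iter k f (x a) = x (a + k%:Z)%R.
  elim: k a => [|k IH] a /=; first by rewrite addr0.
  by rewrite IH xS; congr x; lia.
have : full_orbit f b y by exists n, n.
rewrite orbit_x => -[m _ xm].
have xmn : x (m + n%:Z)%R = x n.
  by rewrite -iter_x xm e -x0 iter_x; congr x; lia.
have [m0|m0] := eqVneq m 0%R; first by rewrite -xm m0 x0.
suff /(@inj_iter _ _ n) finj : injective f by exact: finj e.
case: m m0 xm xmn => [[|d]|k] // _ _ xmn.
  apply: (@periodic_minimal_injective (x n) d.+1) => //.
  by rewrite iter_x -xmn; congr x; lia.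
apply: (@periodic_minimal_injective (x (Negz k + n%:Z)%R) k.+1) => //.
by rewrite iter_x xmn; congr x; lia.
Qed.

End MinimalMap.

Lemma residual_bigcup (T : topologicalType) (I : countType) (A : I -> set T) :
  (forall i, nowhere_dense (A i)) -> residual (~` \bigcup_i A i).
Proof.
move=> ndA; exists (fun n => if unpickle n is Some i then A i else set0).
split=> [n|].
  case: unpickle => [i|]; first exact: ndA.
  by rewrite /nowhere_dense closure0 interior0.
congr setC; apply/seteqP; split=> x [i _ Aix].
  by exists (pickle i) => //; rewrite pickleK.
by move: Aix; case: unpickle => [j|//] Ajx; exists j.
Qed.

Lemma residual_setI (T : topologicalType) (S1 S2 : set T) :
  residual S1 -> residual S2 -> residual (S1 `&` S2).
Proof.
move=> [A1 [nd1 ->]] [A2 [nd2 ->]].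
pose A (i : nat + nat) := match i with inl k => A1 k | inr k => A2 k end.
suff -> : ~` (\bigcup_k A1 k) `&` ~` (\bigcup_k A2 k) = ~` \bigcup_i A i.
  by apply: residual_bigcup => -[] k; [exact: nd1|exact: nd2].
rewrite -setCU; congr setC; apply/seteqP; split=> x.
  by case=> -[k _ Akx]; [exists (inl k)|exists (inr k)].
by case=> -[] k _ Akx; [left|right]; exists k.
Qed.

Lemma homeo_part_of_full_orbit_inj (T : Type) (f : T -> T) (b : T) :
  (forall y, exists x, f x = y) ->
  (forall u v, full_orbit f b (f u) -> f u = f v -> u = v) ->
  homeo_part f b.
Proof.
move=> fsurj finj.
pose g y := projT1 (cid (fsurj y)).
have fg y : f (g y) = y by rewrite /g; case: cid.
have fgn n y : iter n f (iter n g y) = y.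
  by elim: n y => [|n IH] y //; rewrite iterSr iterS fg IH.
pose x (n : int) := if n is Posz m then iter m f b else iter (`|n|%N) g b.
exists x; split=> //; split.
  case=> [m|[|m]]; first by rewrite (_ : Posz m + 1 = Posz m.+1)%R; [|lia].
    by rewrite (_ : Negz 0 + 1 = 0)%R /= ?fg; [|lia].
  by rewrite (_ : Negz m.+1 + 1 = Negz m)%R /= ?fg; [|lia].
have orbit_inj i y w : iter i f y = iter i f w ->
    (exists j, iter i f w = iter j f b) -> y = w.
  elim: i y w => [//|i IH] y w e [j ej].
  apply: finj; last by apply: IH; rewrite -?iterSr //; exists j.
  by exists i, j; rewrite -iterSr e.
apply/seteqP; split=> [y [i [j e]]|_ [[m|m] _ <-] /=]; last 2 first.
- by exists 0%N, m.
- by exists m.+1, 0%N; rewrite fgn.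
have [ji|ij] := leqP i j.
  exists (Posz (j - i)) => //; apply: esym; apply: (orbit_inj i).
    by rewrite -iterD subnKC.
  by exists j; rewrite -iterD subnKC.
exists (Negz (i - j).-1) => //=; rewrite -iterS prednK ?subn_gt0 //.
apply: (orbit_inj i); last by exists j.
by rewrite e -{1}(subnKC (ltnW ij)) iterD fgn.
Qed.

Lemma eventually_not_ball (R : realType) (T : pseudoMetricType R) (u v : T) :
  hausdorff_space T -> u <> v ->
  \forall k \near \oo, ~ ball u (k.+1%:R^-1 + k.+1%:R^-1) v.
Proof.
move=> hT uv.
have [eps neps] : exists eps : {posnum R}, ~ ball u eps%:num v.
  apply: contrapT => uv_close; apply/uv/(close_eq hT).
  rewrite ball_close => eps.
  by apply: contrapT => nb; apply: uv_close; exists eps.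
near=> k => uvk; apply/neps/(le_ball _ uvk).
rewrite [leRHS]splitr; apply: lerD; apply: ltW;
  by near: k; exact: near_infty_natSinv_lt (eps%:num / 2)%:pos.
Unshelve. all: by end_near.
Qed.

Definition twofold_points (R : realType) (T : pseudoMetricType R) (f : T -> T)
  (e : R) := [set y | exists u v, f u = y /\ f v = y /\ ~ ball u e v].

Section MetricMinimalMap.
Variables (R : realType) (T : pseudoMetricType R) (f : T -> T).
Hypotheses (cT : compact [set: T]) (cf : continuous f) (mf : minimal_map f)
  (hT : hausdorff_space T).

(* If [f u0] lies in the interior [U] of the closure, every point of [U] is
   the image of a point outside the [e/2]-ball around [u0]; so the closed set
   [~` ((ball u0 (e / 2))° `&` f @^-1` U)], which misses [u0], still maps
   onto [T]. *)
Lemma closed_nowhere_dense_twofold (e : R) :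
  0 < e -> closed_nowhere_dense (closure (twofold_points f e)).
Proof.
move=> e0; split; first exact: closed_closure.
apply/seteqP; split=> [y1 Uy1|//].
pose U := (closure (twofold_points f e))°.
have oU : open U by exact: open_interior.
have [y0 [[u0 [v0 [fu0 [fv0 _]]]] Uy0]] : (twofold_points f e `&` U) !=set0.
  by apply: (interior_subset Uy1); apply: open_nbhs_nbhs.
pose W := (ball u0 (e / 2))° `&` f @^-1` U.
have oW : open W.
  by apply: openI; [exact: open_interior|apply: open_comp => // x _; exact: cf].
have cfW : closed (f @` ~` W).
  by apply: compact_closed_image => //; exact: open_closedC.
have WT : ~` W = [set: T].
  apply: (minimal_image_setT cT cf mf); first exact: open_closedC.
  move=> y; have [Uy|nUy] := pselect (U y); last first.
    have [x fx] := minimal_surjective cT cf mf hT y.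
    by exists x => // -[_]; rewrite /= fx.
  suff [x nWx fx] : (f @` ~` W) y by exists x.
  apply: cfW => N nN.
  have nNU : nbhs y (N `&` U) by apply: filterI => //; apply: open_nbhs_nbhs.
  have [y' [[u [v [fu [fv nuv]]]] [Ny' Uy']]] := interior_subset Uy _ nNU.
  have [bu|nbu] := pselect (ball u0 (e / 2) u); last first.
    by exists y'; split => //; exists u => // -[/interior_subset].
  have [bv|nbv] := pselect (ball u0 (e / 2) v); last first.
    by exists y'; split => //; exists v => // -[/interior_subset].
  by exfalso; apply/nuv/(ball_splitr bu bv).
have Wu0 : W u0.
  split; last by rewrite /= fu0.
  by apply: nbhsx_ballx; rewrite divr_gt0.
by move: Wu0; rewrite -[W]setCK WT setCT.
Qed.

Lemma residual_homeo_part : exists S, residual S /\ S `<=` homeo_part f.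
Proof.
pose D (ijk : nat * nat * nat) := let: (i, j, k) := ijk in
  iter j f @^-1` (iter i f @` closure (twofold_points f k.+1%:R^-1)).
exists (~` \bigcup_ijk D ijk); split.
  apply: residual_bigcup => -[[i j] k]; apply/closed_nowhere_denseW.
  apply/closed_nowhere_dense_iter_preimage => //.
  apply/closed_nowhere_dense_iter_image => //.
  exact: closed_nowhere_dense_twofold.
move=> b nDb; apply: homeo_part_of_full_orbit_inj.
  exact: minimal_surjective.
move=> u v [i [j e]] fuv; apply: contrapT => nuv.
have [k _ /(_ k (leqnn k)) uv_far] := eventually_not_ball hT nuv.
apply: nDb; exists (i, j, k) => //=; rewrite /preimage /= -e.
exists (f u) => //; apply: subset_closure.
exists u, v; split=> //; split=> // uv.
by apply/uv_far/(le_ball _ uv); rewrite lerDl.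
Qed.

End MetricMinimalMap.

Section Cardinality.
Variables (T : Type) (x0 : T).

Lemma has_card_enum (A : set T) n :
  has_card A n -> exists s : 'I_n -> T, A `<=` range s.
Proof.
rewrite /has_card card_eq_sym => /ocard_eqP /bijPex [g [_ _ gA]].
exists (fun i => odflt x0 (g i)) => y Ay.
have [i ni gi] := gA (Some y) (ex_intro2 _ _ y Ay erefl).
by exists (Ordinal ni); rewrite //= gi.
Qed.

Lemma card_le_ord_inj (A : set T) m : (`I_m #<= A)%card ->
  exists e : 'I_m -> T, injective e /\ forall i, A (e i).
Proof.
elim/Pchoice: T x0 A => U u0 A.
rewrite -card_le_some => /pcard_leP /injfunPex [g gA ginj].
exists (fun i => odflt u0 (g i)); split; last first.
  by move=> i; have [a Aa <-] := gA i (ltn_ord i).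
move=> i j; have [a _ ga] := gA i (ltn_ord i).
have [b _ gb] := gA j (ltn_ord j).
rewrite -ga -gb /= => ab; apply/val_inj/ginj; rewrite ?inE //=.
by rewrite -ga -gb ab.
Qed.

Lemma has_card_leq_of_not_card_le (A : set T) N :
  ~ (`I_N.+1 #<= A)%card -> exists2 n, has_card A n & (n <= N)%N.
Proof.
move=> nA; have [n An] : finite_set A.
  apply/finite_setPn => natA.
  by apply/nA/(card_le_trans _ natA); exact: card_leT.
exists n => //; rewrite leqNgt; apply/negP => Nn; apply: nA.
have [_ In_le_A] := (card_eqPle _ _).1 An.
by apply: card_le_trans In_le_A; rewrite card_le_II.
Qed.

End Cardinality.

Definition ball_cover (R : realType) (T : pseudoMetricType R) (A : set T)
  (N : nat) (e : R) := exists s : 'I_N -> T, A `<=` \bigcup_i (ball (s i) e)°.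

Section BallCover.
Variables (R : realType) (T : pseudoMetricType R) (x0 : T).
Hypothesis hT : hausdorff_space T.

(* Once [N.+1] distinct points are [2/(k+1)]-apart, two of them cannot share
   one of the [N] balls of radius [1/(k+1)]. *)
Lemma ball_covers_not_card_le (A : set T) N :
  (forall k, ball_cover A N k.+1%:R^-1) -> ~ (`I_N.+1 #<= A)%card.
Proof.
move=> cover /(card_le_ord_inj x0) [e [einj eA]].
have : \forall k \near \oo, forall ij : 'I_N.+1 * 'I_N.+1,
    ij.1 != ij.2 -> ~ ball (e ij.1) (k.+1%:R^-1 + k.+1%:R^-1) (e ij.2).
  apply: filter_forall => -[i j] /=; have [->|ij] := eqVneq i j.
    exact: nearW.
  have eij : e i <> e j by move/einj/eqP; exact/negP.
  by apply: filterS (eventually_not_ball hT eij) => k + _.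
move=> [k _ /(_ k (leqnn k)) far].
have [s sA] := cover k.
have /choice[h hs] : forall i, exists c, (ball (s c) k.+1%:R^-1)° (e i).
  by move=> i; have [c _ ec] := sA _ (eA i); exists c.
have /leq_card : injective h.
  move=> i j hij; apply/eqP/contraT => ij; exfalso; apply: (far (i, j) ij).
  apply: ball_triangle (ball_sym (interior_subset (hs i))) _.
  by rewrite hij; exact: interior_subset (hs j).
by rewrite !card_ord ltnn.
Qed.

Lemma ball_covers_has_card (A : set T) N :
  (forall k, ball_cover A N k.+1%:R^-1) ->
  exists2 n, has_card A n & (n <= N)%N.
Proof. by move/ball_covers_not_card_le; exact: has_card_leq_of_not_card_le. Qed.

End BallCover.

Lemma minimal_set_image (T : topologicalType) (F : T -> T) (M : set T) :
  hausdorff_space T -> compact [set: T] -> continuous F -> minimal_set F M ->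
  F @` M = M.
Proof.
move=> hT cT cF [[m Mm] [cM [FM minM]]]; apply: minM => //.
- by exists (F m), m.
- exact: compact_closed_image.
- by move=> _ [_ [x Mx <-] <-]; exists (F x) => //; apply: FM; exists x.
Qed.

Section Fibres.
Variables (R : realType) (E B : pseudoMetricType R) (p : E -> B) (F : E -> E)
  (f : B -> B) (M : set E).
Hypotheses (hE : hausdorff_space E) (cE : compact [set: E])
  (hB : hausdorff_space B) (cB : compact [set: B]) (cp : continuous p)
  (cF : continuous F) (cf : continuous f) (pF : p \o F = f \o p)
  (mf : minimal_map f) (minM : minimal_set F M).

Let cM : closed M. Proof. by case: minM => _ []. Qed.

Lemma open_fibre_subset (U : set E) :
  open U -> open [set b | fibre p M b `<=` U].
Proof.
move=> oU; suff -> : [set b | fibre p M b `<=` U] = ~` (p @` (M `&` ~` U)).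
  rewrite openC; apply: compact_closed_image => //.
  by apply: closedI => //; exact: open_closedC.
apply/seteqP; split=> b.
  by move=> MU [x [Mx nUx] pxb]; apply/nUx/MU.
by move=> nMU x [Mx pxb]; apply: contrapT => nUx; apply: nMU; exists x.
Qed.

Lemma open_fibre_ball_cover N e : open [set b | ball_cover (fibre p M b) N e].
Proof.
suff -> : [set b | ball_cover (fibre p M b) N e] =
    \bigcup_(s : 'I_N -> E)
      [set b | fibre p M b `<=` \bigcup_i (ball (s i) e)°].
  apply: bigcup_open => s _; apply: open_fibre_subset.
  by apply: bigcup_open => i _; exact: open_interior.
by apply/seteqP; split=> b [s]; [exists s|move=> _; exists s].
Qed.

Lemma fibre_iter_subset (b : B) n : homeo_part f b ->
  fibre p M (iter n f b) `<=` iter n F @` fibre p M b.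
Proof.
move=> hb y [My pyb].
have p_iter e : p (iter n F e) = iter n f (p e).
  by elim: n {pyb} => [|m IH] //=; rewrite -IH; exact: (congr1 (@^~ _) pF).
have FM := minimal_set_image hE cE cF minM.
have [w Mw wy] : (iter n F @` M) y.
  elim: n {pyb p_iter} y My => [|m IH] y My; first by exists y.
  have [x Mx <-] := IH y My; rewrite -FM in Mx; have [z Mz <-] := Mx.
  by exists z; rewrite // iterSr.
exists w => //; split=> //.
by apply: (homeo_part_iter_inj cB cf mf hB hb (n := n)); rewrite -p_iter wy.
Qed.

Lemma residual_fibre_ball_cover (x : B) N :
  homeo_part f x -> has_card (fibre p M x) N ->
  exists S, residual S /\
    forall b, S b -> forall k, ball_cover (fibre p M b) N k.+1%:R^-1.
Proof.
move=> hx cardx; have [[e0 _] _] := minM.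
have [s fibre_s] := has_card_enum e0 cardx.
pose O k := [set b | ball_cover (fibre p M b) N k.+1%:R^-1].
exists (~` \bigcup_k ~` O k); split=> [|b nOb k]; last first.
  by apply: contrapT => nO; apply: nOb; exists k.
apply: residual_bigcup => k; apply/closed_nowhere_denseW.
apply: (closed_nowhere_dense_setC_orbit cf mf (b := x)) => [|n].
  exact: open_fibre_ball_cover.
exists (iter n F \o s) => y /(fibre_iter_subset (n := n) hx).
move=> [_ /fibre_s [i _ <-] <-].
by exists i => //; apply: nbhsx_ballx; rewrite invr_gt0.
Qed.

End Fibres.

Local Close Scope ring_scope.
Unset Implicit Arguments.

Theorem proposition3 (R : realType) (E B G : pseudoMetricType R)
  (p : E -> B) (F : E -> E) (f : B -> B) (M : set E) :
  graph_bundle G p ->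
  continuous F -> continuous f -> p \o F = f \o p ->
  minimal_map f -> minimal_set F M -> p @` M = [set: B] ->
  (exists z, homeo_part f z /\ finite_set (fibre p M z)) ->
  exists N : nat,
    (exists x, homeo_part f x /\ has_card (fibre p M x) N) /\
    (forall x k, homeo_part f x -> has_card (fibre p M x) k -> (N <= k)%N) /\
    exists Rs : set B, residual Rs /\ forall b, Rs b -> has_card (fibre p M b) N.
Proof.
move=> [[hE cE] [[hB cB] [_ [cp _]]]] cF cf pF mf minM _ [z [hz [n cardz]]].
pose P k := exists x, homeo_part f x /\ has_card (fibre p M x) k.
have /ex_minnP[N /asboolP[x [hx cardx]] Nmin] : exists k, `[< P k >].
  by exists n; apply/asboolP; exists z.
have N_le x' k : homeo_part f x' -> has_card (fibre p M x') k -> (N <= k)%N.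
  by move=> hx' cardx'; apply/Nmin/asboolP; exists x'.
exists N; split; first by exists x.
split=> //.
have [S1 [resS1 S1_homeo]] := residual_homeo_part cB cf mf hB.
have [S2 [resS2 S2_cover]] :=
  residual_fibre_ball_cover hE cE hB cB cp cF cf pF mf minM hx cardx.
exists (S1 `&` S2); split; first exact: residual_setI.
move=> b [/S1_homeo hb /S2_cover coverb]; have [[e0 _] _] := minM.
have [k cardb kN] := ball_covers_has_card e0 hE coverb.
suff -> : N = k by [].
by apply/eqP; rewrite eqn_leq kN (N_le b k hb cardb).
Qed.
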